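(* Let $A$ be a $DP$ algebra over $R$. Then $A$ admits a structure of abelian group object in $\mathbf{DPAlg}_R$ if and only if the multiplication of $A$ is identically zero ($ab=0$ for all $a,b\in A$), i.e. if and only if $A$ is an abelian group object in the category of (non-unital commutative) $R$-algebras; in that case the group operation is necessarily the addition of $A$. Moreover, if the multiplication of $A$ is zero then: (i) $\gamma_n=0$ for every $n\ge 2$ that is not a power of a prime; (ii) for every prime $p$, $\gamma_p$ is additive, $p\,\gamma_p(a)=0$ and $\gamma_p(ra)=r^p\gamma_p(a)$ for all $a\in A$, $r\in R$; (iii) for every prime $p$ and $e\ge1$, $\gamma_{p^e}=\gamma_p\circ\gamma_p\circ\cdots\circ\gamma_p$ ($e$-fold composite), and $p\,\gamma_{p^e}=0$.
   Context: Fix a commutative unital ring $R$; unadorned $\otimes$ means $\otimes_R$. An ''algebra'' means a commutative, not necessarily unital, $R$-algebra. A $DP$ (divided power) algebra is an algebra $A$ together with maps $\gamma_n:A\to A$ ($n\ge1$) such that for all $a,b\in A$, $r\in R$, $m,n\ge1$: $\gamma_1(a)=a$; $\gamma_n(a+b)=\gamma_n(a)+\sum_{i+j=n,\,i,j\ge1}\gamma_i(a)\gamma_j(b)+\gamma_n(b)$; $\gamma_n(ab)=a^n\gamma_n(b)$; $\gamma_n(rb)=r^n\gamma_n(b)$; $\gamma_m(a)\gamma_n(a)=\frac{(m+n)!}{m!\,n!}\gamma_{m+n}(a)$; $\gamma_m(\gamma_n(a))=\frac{(mn)!}{m!(n!)^m}\gamma_{mn}(a)$. Morphisms of $DP$ algebras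 are algebra maps commuting with all $\gamma_n$; this category is $\mathbf{DPAlg}_R$. Products in $\mathbf{DPAlg}_R$ are the products of underlying algebras with componentwise operations, and the terminal object is $0$. An abelian group object is an object with morphisms (multiplication, unit from the terminal object, inverse) satisfying the abelian group axioms. *)

From HB Require Import structures.
From mathcomp Require Import all_boot all_order all_algebra.
Set Implicit Arguments. Unset Strict Implicit. Unset Printing Implicit Defensive.
Import GRing.Theory.
Local Open Scope ring_scope.

Definition is_alg (R : comPzRingType) (A : lmodType R) (mul : A -> A -> A) :=
  [/\ forall a b c, mul (mul a b) c = mul a (mul b c),
      forall a b, mul a b = mul b a,
      forall a b c, mul (a + b) c = mul a c + mul b c
    & forall (r : R) a b, mul (r *: a) b = r *: mul a b].

(* Divided power axioms (only for indices n >= 1; gamma 0 is irrelevant). *)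
Definition is_dp (R : comPzRingType) (A : lmodType R) (mul : A -> A -> A)
    (gamma : nat -> A -> A) :=
  (forall a, gamma 1%N a = a) /\
  [/\ forall n a b, (1 <= n)%N -> gamma n (a + b) =
        gamma n a + \sum_(1 <= i < n) mul (gamma i a) (gamma (n - i)%N b) + gamma n b,
      forall n a b, (1 <= n)%N -> gamma n (mul a b) = iter n (mul a) (gamma n b),
      forall n (r : R) b, (1 <= n)%N -> gamma n (r *: b) = r ^+ n *: gamma n b,
      forall m n a, (1 <= m)%N -> (1 <= n)%N ->
        mul (gamma m a) (gamma n a) = gamma (m + n) a *+ 'C(m + n, m)
    & forall m n a, (1 <= m)%N -> (1 <= n)%N ->
        gamma m (gamma n a) = gamma (m * n) a *+ ((m * n)`! %/ (m`! * n`! ^ m))].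

Record dpalg (R : comPzRingType) := DPAlg {
  dp_carrier :> lmodType R;
  dp_mul : dp_carrier -> dp_carrier -> dp_carrier;
  dp_gamma : nat -> dp_carrier -> dp_carrier;
  dp_is_alg : is_alg dp_mul;
  dp_is_dp : is_dp dp_mul dp_gamma }.

Definition is_alg_hom (R : comPzRingType) (U V : lmodType R)
    (mulU : U -> U -> U) (mulV : V -> V -> V) (f : U -> V) :=
  [/\ forall x y, f (x + y) = f x + f y,
      forall (r : R) x, f (r *: x) = r *: f x
    & forall x y, f (mulU x y) = mulV (f x) (f y)].

Definition is_dp_hom (R : comPzRingType) (U V : lmodType R)
    (mulU : U -> U -> U) (gU : nat -> U -> U)
    (mulV : V -> V -> V) (gV : nat -> V -> V) (f : U -> V) :=
  is_alg_hom mulU mulV f /\ forall n x, (1 <= n)%N -> f (gU n x) = gV n (f x).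

(* Componentwise operations on the product A x A (the product in DPAlg_R
   and in Alg_R; the module structure on (A * A) is MathComp's product). *)
Definition prod_mul (R : comPzRingType) (A : lmodType R) (mul : A -> A -> A)
  (x y : (A * A)%type) : (A * A)%type := (mul x.1 y.1, mul x.2 y.2).
Definition prod_gamma (R : comPzRingType) (A : lmodType R) (g : nat -> A -> A)
  (n : nat) (x : (A * A)%type) : (A * A)%type := (g n x.1, g n x.2).

(* Abelian group object structure on A in a category of algebras whose
   morphisms are described by [hom] (algebra morphisms or DP morphisms).
   - [m : A * A -> A] is the multiplication, a morphism from the product;
   - the unit is a morphism u : 0 -> A from the terminal (zero) object; it is
     given by its value [e = u 0], and being a morphism from the zero
     algebra/DP algebra means exactly: e + e = e, r *: e = e, e * e = e, and
     gamma_n e = e (n >= 1) in the DP case ([hom_unit]);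
   - [i : A -> A] is the inverse;
   - the group axioms are the usual commutative diagrams, evaluated
     pointwise (the composite A -> 0 -> A is the constant map e). *)
Definition ab_group_object_axioms (A : Type) (m : (A * A)%type -> A) (e : A)
    (i : A -> A) :=
  [/\ forall a b c, m (m (a, b), c) = m (a, m (b, c)),
      forall a, m (e, a) = a /\ m (a, e) = a,
      forall a, m (i a, a) = e /\ m (a, i a) = e
    & forall a b, m (a, b) = m (b, a)].

Definition is_dp_ab_group_object (R : comPzRingType) (A : dpalg R)
    (m : (A * A)%type -> A) (e : A) (i : A -> A) :=
  [/\ is_dp_hom (prod_mul (@dp_mul R A)) (prod_gamma (@dp_gamma R A))
        (@dp_mul R A) (@dp_gamma R A) m,
      [/\ e + e = e, forall r : R, r *: e = e, dp_mul e e = e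
        & forall n, (1 <= n)%N -> dp_gamma n e = e],
      is_dp_hom (@dp_mul R A) (@dp_gamma R A) (@dp_mul R A) (@dp_gamma R A) i
    & ab_group_object_axioms m e i].

Definition is_alg_ab_group_object (R : comPzRingType) (A : dpalg R)
    (m : (A * A)%type -> A) (e : A) (i : A -> A) :=
  [/\ is_alg_hom (prod_mul (@dp_mul R A)) (@dp_mul R A) m,
      [/\ e + e = e, forall r : R, r *: e = e & dp_mul e e = e],
      is_alg_hom (@dp_mul R A) (@dp_mul R A) i
    & ab_group_object_axioms m e i].

From mathcomp Require Import all_boot all_order all_algebra.
From mathcomp Require Import ring.
Import GRing.Theory.
Local Open Scope ring_scope.
Set Implicit Arguments. Unset Strict Implicit.

(* A group law m on A is additive with a unit e satisfying e + e = e, so e = 0 and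
   m (a, b) = m (a, 0) + m (0, b) = a + b; that addition is multiplicative then
   gives a b = (a + 0) (0 + b) = a 0 + 0 b = 0.  Conversely, when the product
   vanishes every gamma_n is additive, so addition is a group law of DP algebras.

   With zero product, gamma_k (a) gamma_(n-k) (a) = C(n, k) gamma_n (a) shows that
   gamma_n (a) is killed by n and by every C(n, k), 0 < k < n.  By Frobenius on
   (X + 1)^n, C(n, n_p) = n / n_p (mod p) is prime to p, where n_p is the p-part
   of n, so these numbers have no common prime factor unless n is a prime power.
   For q = p^k the composition axiom gives gamma_p (gamma_q a) = c gamma_pq (a)
   with c = (pq)! / (p! q!^p) = prod_(j <= p) C(jq - 1, q - 1) = 1 (mod p);
   together with pq gamma_pq (a) = 0 this yields p gamma_pq (a) = 0 and
   c gamma_pq (a) = gamma_pq (a). *)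

Lemma coef_exprXD1 (R : nzSemiRingType) n i :
  (('X + 1 : {poly R}) ^+ n)`_i = 'C(n, i)%:R.
Proof.
elim: n i => [|n IHn] i; first by rewrite expr0 coef1 bin0n.
rewrite exprS mulrDl mul1r coefD coefXM !IHn.
case: i => [|i] /=; first by rewrite add0r !bin0.
by rewrite binS natrD addrC.
Qed.

Section Frobenius.
Variables (R : comNzRingType) (p : nat).
Hypothesis pcharRp : p \in [pchar R].

Lemma exprXD1_pchar k : ('X + 1 : {poly R}) ^+ (p ^ k) = 'X^(p ^ k) + 1.
Proof.
rewrite exprDn_pchar ?expr1n // pnatX pnatE ?pchar_poly ?pcharRp //.
exact: pcharf_prime pcharRp.
Qed.

Lemma bin_pexp_mul_pchar k s : 'C(p ^ k * s, p ^ k)%:R = s%:R :> R.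
Proof.
have q_gt0 : (0 < p ^ k)%N by rewrite expn_gt0 prime_gt0 // (pcharf_prime pcharRp).
rewrite -coef_exprXD1 exprM exprXD1_pchar.
have -> : ('X^(p ^ k) + 1) ^+ s = (('X + 1) ^+ s) \Po ('X^(p ^ k) : {poly R}).
  by rewrite rmorphXn rmorphD /= comp_polyX comp_polyC.
by rewrite coef_comp_poly_Xn // dvdnn divnn q_gt0 coef_exprXD1 bin1.
Qed.

Lemma bin_pexp_mul_pred_pchar k j : (0 < j)%N ->
  'C(j * p ^ k - 1, p ^ k - 1)%:R = 1 :> R.
Proof.
(* (X + 1)^(jq - 1) = (X^q + 1)^(j - 1) (X + 1)^(q - 1), and the first factor is 1 mod X^q. *)
move=> j_gt0; set q := (p ^ k)%N.
have q_gt0 : (0 < q)%N by rewrite expn_gt0 prime_gt0 // (pcharf_prime pcharRp).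
have [S defS] : exists S, ('X^q + 1) ^+ j.-1 = 1 + 'X^q * S :> {poly R}.
  have := subrXX ('X^q + 1 : {poly R}) 1 j.-1; rewrite expr1n addrK => E.
  by exists (\sum_(i < j.-1) ('X^q + 1) ^+ (j.-2 - i) * 1 ^+ i); rewrite -E addrCA subrr addr0.
have -> : (j * q - 1 = q * j.-1 + (q - 1))%N.
  by rewrite -{1}(prednK j_gt0) mulSn addnBA // addnC mulnC.
rewrite -coef_exprXD1 exprD exprM exprXD1_pchar defS mulrDl mul1r -mulrA.
by rewrite coefD coefXnM subn1 ltn_predL q_gt0 addr0 coef_exprXD1 binn.
Qed.
End Frobenius.

Lemma coprime_bin_ppart p n : prime p -> (0 < n)%N -> coprime p 'C(n, p ^ logn p n).
Proof.
move=> p_pr n_gt0; have [s p_coprime_s def_n] := pfactor_coprime p_pr n_gt0.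
rewrite {1}def_n mulnC prime_coprime // (dvdn_pcharf (pchar_Fp p_pr)).
by rewrite bin_pexp_mul_pchar ?pchar_Fp // -(dvdn_pcharf (pchar_Fp p_pr)) -prime_coprime.
Qed.

Lemma fact_mul_prod_bin m n : (0 < n)%N ->
  ((m * n)`! = (\prod_(1 <= j < m.+1) 'C(j * n - 1, n - 1)) * (m`! * n`! ^ m))%N.
Proof.
case: n => [//|n] _; rewrite subn1 /=.
elim: m => [|m IHm]; first by rewrite mul0n big_geq.
rewrite big_nat_recr //=; set N := (m.+1 * n.+1)%N.
have N_sub : (N - n.+1 = m * n.+1)%N by rewrite /N mulSn addKn.
have binN : 'C(N, n.+1) = (m.+1 * 'C(N.-1, n))%N.
  apply/eqP; rewrite -(eqn_pmul2l (ltn0Sn n)) -mul_bin_diag /N; by apply/eqP; ring.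
have := @bin_fact N n.+1 (leq_pmull n.+1 (ltn0Sn m)); rewrite N_sub IHm binN => <-.
rewrite subn1 [(m.+1)`!]factS expnS.
set P := \prod_(_ <= _ < _) _; set E := (_ ^ m)%N; set C := 'C(N.-1, n); ring.
Qed.

Definition dp_coef m n := ((m * n)`! %/ (m`! * n`! ^ m))%N.

Lemma dp_coef_pexp_modp p k : prime p -> (dp_coef p (p ^ k) %% p = 1)%N.
Proof.
move=> p_pr; have q_gt0 : (0 < p ^ k)%N by rewrite expn_gt0 prime_gt0.
rewrite /dp_coef fact_mul_prod_bin // mulnK ?muln_gt0 ?fact_gt0 ?expn_gt0 ?fact_gt0 //.
rewrite -val_Fp_nat // natr_prod big_nat_cond big1 => [|j /andP[/andP[j_gt0 _] _]].
  by rewrite -[1]/(1%:R) val_Fp_nat // modn_small // prime_gt1.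
exact: bin_pexp_mul_pred_pchar (pchar_Fp p_pr) _ _ j_gt0.
Qed.

Section NatmulTorsion.
Variables (V : zmodType) (x : V).

Lemma mulrn_gcdn_eq0 a b : x *+ a = 0 -> x *+ b = 0 -> x *+ gcdn a b = 0.
Proof.
move=> xa xb; have [->|a_gt0] := posnP a; first by rewrite gcd0n.
have [u _ /dvdnP[t def_ua]] := Bezoutl b a_gt0.
have := congr1 (fun n => x *+ n) def_ua.
by rewrite /= mulrnDr mulnC mulrnA xb mul0rn addr0 mulnC mulrnA xa mul0rn.
Qed.

Lemma mulrn_modn p c : x *+ p = 0 -> x *+ c = x *+ (c %% p).
Proof. by move=> xp; rewrite {1}(divn_eq c p) mulrnDr mulnC mulrnA xp mul0rn add0r. Qed.

Lemma natmul_order_exists n : (0 < n)%N -> x *+ n = 0 ->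
  exists2 d, (0 < d)%N & x *+ d = 0 /\ forall c, x *+ c = 0 -> (d %| c)%N.
Proof.
move=> n_gt0 xn.
have ex_ann : exists c, (0 < c)%N && (x *+ c == 0) by exists n; rewrite n_gt0 xn eqxx.
have [d /andP[d_gt0 /eqP xd] d_min] := ex_minnP ex_ann.
exists d => //; split=> // c xc.
have gcd_gt0 : (0 < gcdn d c)%N by rewrite gcdn_gt0 d_gt0.
have /d_min d_le : (0 < gcdn d c)%N && (x *+ gcdn d c == 0).
  by rewrite gcd_gt0 (mulrn_gcdn_eq0 xd xc) eqxx.
by apply/gcdn_idPl/eqP; rewrite eqn_leq d_le andbT dvdn_leq ?dvdn_gcdl.
Qed.
End NatmulTorsion.

Section UnitLaw.
Variables (V : zmodType) (m : (V * V)%type -> V) (e : V).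
Hypotheses (mD : forall x y, m (x + y) = m x + m y) (e_idem : e + e = e)
  (m_unit : forall a, m (e, a) = a /\ m (a, e) = a).

Lemma unit_law_addE a b : m (a, b) = a + b.
Proof.
have e0 : e = 0 by apply: (addrI e); rewrite addr0.
have -> : (a, b) = (a, 0) + (0, b) :> V * V by rewrite -[RHS]/(a + 0, 0 + b) addr0 add0r.
by rewrite mD -e0 (m_unit a).2 (m_unit b).1.
Qed.
End UnitLaw.

Lemma multiplicative_add_mul0 (R : comPzRingType) (A : lmodType R) (mul : A -> A -> A) :
  is_alg mul -> (forall x y : A * A, mul x.1 y.1 + mul x.2 y.2 = mul (x.1 + x.2) (y.1 + y.2)) ->
  forall a b, mul a b = 0.
Proof.
move=> [_ mulC _ mulZ] addM a b.
have mul0 c : mul 0 c = 0 by have := mulZ 0 0 c; rewrite !scale0r.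
by have := addM (a, 0) (0, b); rewrite /= mulC !mul0 !addr0 add0r.
Qed.

Section GroupObjects.
Variables (R : comPzRingType) (A : dpalg R).
Implicit Types (m : (A * A)%type -> A) (e : A) (i : A -> A).

Lemma dp_group_object_alg m e i :
  is_dp_ab_group_object m e i -> is_alg_ab_group_object m e i.
Proof. by case=> [[mhom _] [e_idem eZ eM _] [ihom _] ax]. Qed.

Lemma alg_group_object_addE m e i :
  is_alg_ab_group_object m e i -> forall a b, m (a, b) = a + b.
Proof.
case=> [[mD _ _] [e_idem _ _] _ [_ m_unit _ _]].
exact: unit_law_addE mD e_idem m_unit.
Qed.

Lemma alg_group_object_mul0 m e i :
  is_alg_ab_group_object m e i -> forall a b : A, dp_mul a b = 0.
Proof.
move=> G; have [[_ _ mM] _ _ _] := G.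
apply: multiplicative_add_mul0 (dp_is_alg A) _ => -[x1 x2] [y1 y2].
by rewrite -!(alg_group_object_addE G) -mM.
Qed.

Lemma add_ab_group_object_axioms :
  ab_group_object_axioms (fun x : A * A => x.1 + x.2) 0 (fun a => - a).
Proof.
split=> [a b c | a | a | a b] /=.
- by rewrite addrA.
- by rewrite add0r addr0.
- by rewrite addNr subrr.
- by rewrite addrC.
Qed.
End GroupObjects.

Section ZeroMultiplication.
Variables (R : comPzRingType) (A : dpalg R).
Hypothesis mul0 : forall a b : A, dp_mul a b = 0.
Local Notation gamma := (@dp_gamma R A).

Lemma gammaD n (a b : A) : (1 <= n)%N -> gamma n (a + b) = gamma n a + gamma n b.
Proof.
case: (dp_is_dp A) => _ [gD _ _ _ _] n_gt0.
by rewrite gD // big1 ?addr0 // => k _; rewrite mul0.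
Qed.

Lemma gamma0 n : (1 <= n)%N -> gamma n 0 = 0.
Proof. by move=> n_gt0; apply: (addrI (gamma n 0)); rewrite -gammaD // !addr0. Qed.

Lemma gammaN n (a : A) : (1 <= n)%N -> gamma n (- a) = - gamma n a.
Proof. by move=> n_gt0; apply/eqP; rewrite -addr_eq0 addrC -gammaD // subrr gamma0. Qed.

Lemma gamma_mulrn_bin n k (a : A) : (0 < k < n)%N -> gamma n a *+ 'C(n, k) = 0.
Proof.
case: (dp_is_dp A) => _ [_ _ _ gM _] /andP[k_gt0 k_lt_n].
have := gM k (n - k)%N a k_gt0; rewrite subn_gt0 mul0 => /(_ k_lt_n).
by rewrite -[X in gamma X a]/(k + (n - k))%N subnKC ?(ltnW k_lt_n).
Qed.

Lemma gamma_mulrn_n n (a : A) : (2 <= n)%N -> gamma n a *+ n = 0.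
Proof. by move=> n_ge2; rewrite -{2}(bin1 n) gamma_mulrn_bin // n_ge2. Qed.

Lemma add_alg_group_object :
  is_alg_ab_group_object (fun x : A * A => x.1 + x.2) 0 (fun a => - a).
Proof.
split; last exact: add_ab_group_object_axioms.
- split=> [x y | r x | x y].
  + exact: addrACA.
  + by rewrite scalerDr.
  + by rewrite /prod_mul /= !mul0 addr0.
- split; [exact: addr0 | exact: scaler0 | exact: mul0].
- split=> [x y | r x | x y].
  + exact: opprD.
  + by rewrite scalerN.
  + by rewrite !mul0 oppr0.
Qed.

Lemma add_dp_group_object :
  is_dp_ab_group_object (fun x : A * A => x.1 + x.2) 0 (fun a => - a).
Proof.
have [mhom [e_idem eZ eM] ihom ax] := add_alg_group_object.
split=> //.
- by split=> // n x n_gt0; rewrite /prod_gamma gammaD.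
- by split=> // n n_gt0; rewrite gamma0.
- by split=> // n x n_gt0; rewrite gammaN.
Qed.

Lemma gamma_not_prime_power n (a : A) : (2 <= n)%N ->
  ~ (exists p k, prime p /\ n = (p ^ k)%N) -> gamma n a = 0.
Proof.
move=> n_ge2 not_ppow; have n_gt0 := ltnW n_ge2.
have [d d_gt0 [ad_eq0 d_dvd]] := natmul_order_exists n_gt0 (gamma_mulrn_n a n_ge2).
have [d_le1 | d_gt1] := leqP d 1.
  by move: ad_eq0; rewrite (_ : d = 1%N) ?mulr1n //; apply/eqP; rewrite eqn_leq d_le1.
have p_pr : prime (pdiv d) := pdiv_prime d_gt1.
set q := (pdiv d ^ logn (pdiv d) n)%N.
have q_lt_n : (q < n)%N.
  rewrite ltn_neqAle dvdn_leq ?pfactor_dvdnn // andbT.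
  by apply/eqP => def_n; apply: not_ppow; exists (pdiv d), (logn (pdiv d) n).
have p_dvd_bin : (pdiv d %| 'C(n, q))%N.
  by apply: dvdn_trans (pdiv_dvd d) (d_dvd _ _); rewrite gamma_mulrn_bin ?expn_gt0 ?prime_gt0.
by have := coprime_bin_ppart p_pr n_gt0; rewrite prime_coprime // p_dvd_bin.
Qed.

Lemma gamma_comp_pexp p k (a : A) : prime p ->
  gamma p (gamma (p ^ k) a) = gamma (p ^ k.+1) a /\ gamma (p ^ k.+1) a *+ p = 0.
Proof.
case: (dp_is_dp A) => _ [_ _ _ _ gC] p_pr.
have p_ge2 := prime_gt1 p_pr.
set x := gamma (p ^ k.+1) a.
have gC_pq : gamma p (gamma (p ^ k) a) = x *+ dp_coef p (p ^ k).
  by rewrite gC ?expn_gt0 ?prime_gt0 // /x expnS.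
have c_modp := dp_coef_pexp_modp k p_pr.
have xcp : x *+ (dp_coef p (p ^ k) * p) = 0 by rewrite mulrnA -gC_pq gamma_mulrn_n.
have xpq : x *+ (p * p ^ k) = 0.
  rewrite -expnS gamma_mulrn_n // expnS (leq_trans p_ge2) // leq_pmulr //.
  by rewrite expn_gt0 prime_gt0.
have coprime_c_q : coprime (dp_coef p (p ^ k)) (p ^ k).
  by apply: coprimeXr; rewrite -coprime_modl c_modp coprime1n.
have xp : x *+ p = 0.
  by have := mulrn_gcdn_eq0 xcp xpq; rewrite mulnC -muln_gcdr (eqP coprime_c_q) muln1.
by rewrite gC_pq (mulrn_modn _ xp) c_modp mulr1n.
Qed.

Lemma gamma_pexp_iter p k (a : A) : prime p -> gamma (p ^ k) a = iter k (gamma p) a.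
Proof.
move=> p_pr; elim: k => [|k IHk]; first by case: (dp_is_dp A).
by rewrite -(gamma_comp_pexp k a p_pr).1 IHk.
Qed.
End ZeroMultiplication.

Theorem mainTheorem1 (R : comPzRingType) (A : dpalg R) :
  let mul := @dp_mul R A in
  let gamma := @dp_gamma R A in
  [/\ (exists m e i, @is_dp_ab_group_object R A m e i) <-> (forall a b : A, mul a b = 0),
      (exists m e i, @is_alg_ab_group_object R A m e i) <-> (forall a b : A, mul a b = 0),
      forall m e i, @is_dp_ab_group_object R A m e i -> forall a b : A, m (a, b) = a + b
    & (forall a b : A, mul a b = 0) ->
      [/\ (* (i) *)
          forall n, (2 <= n)%N -> ~ (exists p k, prime p /\ n = (p ^ k)%N) ->
            forall a : A, gamma n a = 0,
          (* (ii) *)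
          forall p, prime p ->
            [/\ forall a b : A, gamma p (a + b) = gamma p a + gamma p b,
                forall a : A, gamma p a *+ p = 0
              & forall (r : R) (a : A), gamma p (r *: a) = r ^+ p *: gamma p a]
        & (* (iii) *)
          forall p k, prime p -> (1 <= k)%N ->
            (forall a : A, gamma (p ^ k)%N a = iter k (gamma p) a) /\
            (forall a : A, gamma (p ^ k)%N a *+ p = 0)]].
Proof.
move=> mul gamma; subst mul gamma; split.
- split=> [[m [e [i /dp_group_object_alg/alg_group_object_mul0]]] // | mul0].
  by exists (fun x => x.1 + x.2), 0, (fun a => - a); exact: add_dp_group_object.
- split=> [[m [e [i /alg_group_object_mul0]]] // | mul0].
  by exists (fun x => x.1 + x.2), 0, (fun a => - a); exact: add_alg_group_object.
- by move=> m e i /dp_group_object_alg/alg_group_object_addE.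
move=> mul0; split.
- by move=> n n_ge2 not_ppow a; apply: gamma_not_prime_power.
- move=> p p_pr; split=> [a b | a | r a].
  + by rewrite gammaD ?prime_gt0.
  + by rewrite gamma_mulrn_n ?prime_gt1.
  + by case: (dp_is_dp A) => _ [_ _ gZ _ _]; rewrite gZ ?prime_gt0.
- move=> p [//|k] p_pr _; split=> a; first exact: gamma_pexp_iter.
  exact: (gamma_comp_pexp mul0 k a p_pr).2.
Qed.
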